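(* Let $n\ge 0$ and let $R$ be a rook placement in the double staircase $2\delta_n$. Then the word $d(R)$ is a Dyck path of length $2n+2$, i.e. every prefix of $d(R)$ contains at least as many steps $\nearrow$ as steps $\searrow$, and $d(R)$ contains $n+1$ steps of each kind.
   Context: The double staircase $2\delta_n$ is the Young diagram (French convention: rows drawn bottom to top, left-justified) with row lengths $2n,2n-2,\dots,2$ from bottom to top; its columns are numbered $1,\dots,2n$ from left to right. A rook placement of size $n$ is a set of dots placed in cells of $2\delta_n$ such that each row contains exactly one dot and each column contains at most one dot. For such $R$, $d(R)$ is the word $w_1\cdots w_{2n+2}$ over $\{\nearrow,\searrow\}$ defined by: $w_1=\nearrow$, $w_{2n+2}=\searrow$, and for $2\le i\le 2n+1$, $w_i=\nearrow$ if column $i-1$ of $R$ contains a dot and $w_i=\searrow$ otherwise. A Dyck path of length $2m$ is a lattice path from $(0,0)$ to $(2m,0)$ with steps $\nearrow=(1,1)$ and $\searrow=(1,-1)$ never going below the $x$-axis (identified with the word of its steps). *)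

From mathcomp Require Import all_boot.
Set Implicit Arguments. Unset Strict Implicit. Unset Printing Implicit Defensive.

Definition up := true.
Definition down := false.

(* Double staircase 2δ_n, French convention, rows and columns 0-based:
   row r (r < n, r = 0 is the bottom row) has length 2n - 2r, so cell
   (r, c) belongs to 2δ_n iff c < 2 * (n - r).
   A rook placement of size n with exactly one dot per row is a function
   f assigning to each row r the column f r of its dot; "at most one dot
   per column" is injectivity of f. *)
Definition rook_placement (n : nat) (f : 'I_n -> 'I_(2 * n)) : Prop :=
  (forall r : 'I_n, (nat_of_ord (f r) < 2 * (n - r))%N) /\ injective f.

(* d(R): w_1 = up, w_(2n+2) = down, and for 2 <= i <= 2n+1,
   w_i = up iff column i-1 (1-based), i.e. column i-2 (0-based), has a dot. *)
Definition dword (n : nat) (f : 'I_n -> 'I_(2 * n)) : seq bool :=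
  up :: [seq (j \in codom f) | j <- enum 'I_(2 * n)] ++ [:: down].

Definition dyck_path (m : nat) (w : seq bool) : Prop :=
  size w = (2 * m)%N /\
  (forall k : nat, (count_mem down (take k w) <= count_mem up (take k w))%N) /\
  count_mem up w = count_mem down w.

(* Among the first m columns of 2δ_n (m <= 2n), at least ⌊m/2⌋ carry a dot:
   the top ⌊m/2⌋ rows have length at most m, so their dots lie there, in
   pairwise distinct columns.  Hence after the initial up-step every prefix
   of d(R) has at least as many up-steps as down-steps, and since the n dots
   occupy n of the 2n columns, the final down-step closes the path at 0. *)
From mathcomp Require Import all_boot.
From mathcomp Require Import zify.

Set Implicit Arguments.
Unset Strict Implicit.
Unset Printing Implicit Defensive.

Lemma count_up_map (T : Type) (p : pred T) (s : seq T) :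
  count_mem up (map p s) = count p s.
Proof. by rewrite count_map; apply: eq_count => x /=; case: (p x). Qed.

Lemma count_down_map (T : Type) (p : pred T) (s : seq T) :
  count_mem down (map p s) = size s - count p s.
Proof.
rewrite count_map -(count_predC p s) addKn.
by apply: eq_count => x /=; case: (p x).
Qed.

Lemma count_geq_iota (a m : nat) : count (leq a) (iota 0 m) = m - a.
Proof.
have [le_am | lt_ma] := leqP a m; last first.
  rewrite (eqP (ltnW lt_ma)); apply/eqP; rewrite -leqn0 leqNgt -has_count.
  by apply/hasP => -[x]; rewrite mem_iota /= => lt_xm; rewrite leqNgt (ltn_trans lt_xm).
rewrite -{1}(subnKC le_am) iotaD count_cat add0n.
rewrite (eq_in_count (a2 := pred0)) ?count_pred0; last first.
  by move=> x; rewrite mem_iota /= => lt_xa; rewrite leqNgt lt_xa.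
rewrite (eq_in_count (a2 := predT)) ?count_predT ?size_iota //.
by move=> x; rewrite mem_iota => /andP[].
Qed.

Lemma count_mem_iota (s : seq nat) (m : nat) :
  uniq s -> count (mem s) (iota 0 m) = count (gtn m) s.
Proof.
move=> uniq_s; rewrite -!size_filter; apply: perm_size.
apply: uniq_perm; rewrite ?filter_uniq ?iota_uniq // => x.
by rewrite !mem_filter mem_iota andbC.
Qed.

Lemma dyck_path_wrap (m : nat) (w : seq bool) :
  size w = 2 * m ->
  count_mem up w = count_mem down w ->
  (forall k, count_mem down (take k w) <= (count_mem up (take k w)).+1) ->
  dyck_path m.+1 (up :: w ++ [:: down]).
Proof.
move=> size_w balanced_w ballot_w.
split; first by rewrite /= size_cat size_w /=; lia.
split; last by rewrite /= !count_cat balanced_w /=; lia.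
case=> [|k] //=; rewrite take_cat.
case: ltnP => _; first by rewrite add0n.
by rewrite !count_cat balanced_w; case: (k - size w) => /=; lia.
Qed.

Section RookPlacement.

Variables (n : nat) (f : 'I_n -> 'I_(2 * n)).
Hypothesis f_in_staircase : forall r : 'I_n, f r < 2 * (n - r).
Hypothesis f_inj : injective f.

Definition dot_columns : seq nat := [seq val (f r) | r <- enum 'I_n].

Definition column_word : seq bool :=
  [seq j \in dot_columns | j <- iota 0 (2 * n)].

Lemma uniq_dot_columns : uniq dot_columns.
Proof.
rewrite map_inj_uniq ?enum_uniq //.
by move=> r r' /val_inj; apply: f_inj.
Qed.

Lemma dwordE : dword f = up :: column_word ++ [:: down].
Proof.
congr (_ :: _ ++ _); rewrite /column_word -val_enum_ord -[RHS]map_comp.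
apply: eq_map => j /=.
by rewrite /dot_columns map_comp (mem_map val_inj) codomE.
Qed.

Lemma count_dot_columns (m : nat) :
  count (mem dot_columns) (iota 0 m) = count (fun r : 'I_n => f r < m) (enum 'I_n).
Proof. by rewrite count_mem_iota ?uniq_dot_columns // /dot_columns count_map. Qed.

Lemma half_le_count_dot_columns (m : nat) :
  m <= 2 * n -> m./2 <= count (mem dot_columns) (iota 0 m).
Proof.
move=> le_m2n; rewrite count_dot_columns.
have le_half_n : m./2 <= n by have := half_leq le_m2n; rewrite mul2n doubleK.
have top_rows_in_first_columns : subpred (fun r : 'I_n => n - m./2 <= r) (fun r => f r < m).
  move=> r /= le_top_r; apply: leq_trans (f_in_staircase r) _.
  move: le_top_r (odd_double_half m); rewrite -muln2; lia.
apply: leq_trans (sub_count top_rows_in_first_columns _).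
rewrite -[count _ (enum 'I_n)](count_map val (leq (n - m./2))).
by rewrite val_enum_ord count_geq_iota subKn.
Qed.

Lemma count_dot_columns_all : count (mem dot_columns) (iota 0 (2 * n)) = n.
Proof.
rewrite count_dot_columns (eq_count (a2 := predT)) ?count_predT ?size_enum_ord //.
by move=> r; apply: ltn_ord.
Qed.

Lemma count_up_column_word : count_mem up column_word = n.
Proof. by rewrite count_up_map count_dot_columns_all. Qed.

Lemma count_down_column_word : count_mem down column_word = n.
Proof. by rewrite count_down_map size_iota count_dot_columns_all; lia. Qed.

Lemma column_word_ballot (k : nat) :
  count_mem down (take k column_word) <= (count_mem up (take k column_word)).+1.
Proof.
rewrite -map_take take_iota count_up_map count_down_map size_iota.
have := half_le_count_dot_columns (geq_minr k (2 * n)).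
have := odd_double_half (minn k (2 * n)).
set l := minn _ _; set c := count _ _; rewrite -muln2; lia.
Qed.

End RookPlacement.

Theorem mainTheorem1 (n : nat) (f : 'I_n -> 'I_(2 * n)) :
  rook_placement f ->
  dyck_path n.+1 (dword f) /\
  (forall k : nat,
     (count_mem down (take k (dword f)) <= count_mem up (take k (dword f)))%N) /\
  count_mem up (dword f) = n.+1 /\ count_mem down (dword f) = n.+1.
Proof.
move=> [f_in_staircase f_inj].
have count_up_w := count_up_column_word f_inj.
have count_down_w := count_down_column_word f_inj.
have dyck_d : dyck_path n.+1 (dword f).
  rewrite dwordE; apply: dyck_path_wrap.
  - by rewrite size_map size_iota.
  - by rewrite count_up_w count_down_w.
  - exact: column_word_ballot.
split; first exact: dyck_d.
split; first exact: dyck_d.2.1.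
by rewrite dwordE /= !count_cat count_up_w count_down_w /=; lia.
Qed.
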